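(* For every relational structure $\mathfrak{C}$ in which every relation symbol has arity at most $m$ (for some $m\in\mathbb N$) there exists a relational structure $\mathfrak{B}$ in which every relation symbol has arity at most $2$ such that $\mathfrak{B}$ and $\mathfrak{C}$ are primitively positively bi-interpretable. If the signature of $\mathfrak{C}$ is finite, then $\mathfrak{B}$ can be chosen to have a finite signature as well.
   Context: A primitive positive formula is an existentially quantified conjunction of atomic formulas (relational atoms, equalities, $\top$, $\bot$). A primitive positive (pp-) interpretation $I$ of a $\sigma$-structure $\mathfrak{B}$ in a $\tau$-structure $\mathfrak{A}$ of dimension $d$ consists of a pp $\tau$-formula $\delta_I(x_1,\dots,x_d)$, a pp $\tau$-formula $\phi_I$ for each atomic $\sigma$-formula $\phi$ (including equality), and a surjective coordinate map $h_I\colon D_I\to B$ with $D_I=\delta_I(\mathfrak{A})\subseteq A^d$ such that $\mathfrak{B}\models\phi(h_I(\bar a_1),\dots,h_I(\bar a_k))$ iff $\mathfrak{A}\models\phi_I(\bar a_1,\dots,\bar a_k)$ for all $\bar a_i\in D_I$. If $I_1$ is a $d_1$-dimensional pp-interpretation of $\mathfrak{C}_1$ in $\mathfrak{C}_2$ and $I_2$ a $d_2$-dimensional pp-interpretation of $\mathfrak{C}_2$ in $\mathfrak{C}_3$, the composition $I_1\circ I_2$ is the $d_1d_2$-dimensional pp-interpretation of $\mathfrak{C}_1$ in $\mathfrak{C}_3$ (with formulas obtained by replacing atomic $\tau_2$-formulas in the formulas of $I_1$ by their $I_2$-translations) whose coordinate map sends $(a^1_1,\dots,a^1_{d_2},\dots,a^{d_1}_1,\dots,a^{d_1}_{d_2})$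 to $h_{I_1}(h_{I_2}(a^1_1,\dots,a^1_{d_2}),\dots,h_{I_2}(a^{d_1}_1,\dots,a^{d_1}_{d_2}))$. Two pp-interpretations $I_1,I_2$ of $\mathfrak{B}$ in $\mathfrak{A}$ are homotopic if the relation $\{(\bar x,\bar y)\mid h_{I_1}(\bar x)=h_{I_2}(\bar y)\}$ is pp-definable in $\mathfrak{A}$. The identity interpretation of $\mathfrak{C}$ in $\mathfrak{C}$ is the 1-dimensional one with identity coordinate map. $\mathfrak{A}$ and $\mathfrak{B}$ are primitively positively bi-interpretable if there are pp-interpretations $I$ of $\mathfrak{B}$ in $\mathfrak{A}$ and $J$ of $\mathfrak{A}$ in $\mathfrak{B}$ such that $I\circ J$ and $J\circ I$ are homotopic to the respective identity interpretations. *)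

From mathcomp Require Import all_boot.
From Stdlib Require List.

Set Implicit Arguments.
Unset Strict Implicit.
Unset Printing Implicit Defensive.

(* A structure has an (arbitrary, possibly empty) domain and, for each symbol
   [s], a relation of arity [ar s], i.e. a predicate on [ar s]-tuples
   ('I_(ar s) -> dom). *)
Record structure (St : Type) (ar : St -> nat) : Type := Structure {
  dom : Type;
  rel : forall s : St, ('I_(ar s) -> dom) -> Prop
}.

Definition finite_sig (St : Type) : Prop := exists l : list St, forall s, List.In s l.

(* Atomic formulas are relational
   atoms, equalities, top and bottom; connectives are conjunction and
   existential quantification (which binds a fresh variable [None] of
   [option V]). *)
Inductive ppf (St : Type) (ar : St -> nat) : Type -> Type :=
  | PTop  (V : Type) : ppf ar V
  | PBot  (V : Type) : ppf ar V
  | PAtom (V : Type) (s : St) (args : 'I_(ar s) -> V) : ppf ar V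
  | PEq   (V : Type) (x y : V) : ppf ar V
  | PAnd  (V : Type) (f g : ppf ar V) : ppf ar V
  | PEx   (V : Type) (f : ppf ar (option V)) : ppf ar V.

Fixpoint sat (St : Type) (ar : St -> nat) (A : structure ar) (V : Type)
    (f : ppf ar V) : (V -> dom A) -> Prop :=
  match f in ppf _ V0 return (V0 -> dom A) -> Prop with
  | PTop _ => fun _ => True
  | PBot _ => fun _ => False
  | PAtom _ s args => fun e => @rel _ _ A s (fun j => e (args j))
  | PEq _ x y => fun e => e x = e y
  | PAnd _ f g => fun e => @sat _ _ A _ f e /\ @sat _ _ A _ g e
  | PEx _ f => fun e =>
      exists a : dom A,
        @sat _ _ A _ f (fun o => match o with Some v => e v | None => a end)
  end.

Arguments sat {St ar} A {V} f _.
Arguments rel {St ar} s _ _ : rename.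

(* A d-dimensional pp-interpretation of [B] (signature (Sb, arb)) in [A]
   (signature (Sa, ara)).  Tuples in A^d are functions 'I_d -> dom A.
   - [idelta] is the domain formula delta_I(x_1..x_d), D_I = delta_I(A);
   - [iphi s] is the formula for the atomic formula s(y_1,..,y_k)
     (k = arb s); its variables are pairs (j, i) = i-th coordinate of the
     j-th argument tuple;
   - [ieq] is the formula for the atomic formula y_1 = y_2; its variables are
     pairs (b, i), b = false for the first and b = true for the second tuple;
   - [imap] is the coordinate map h_I (only its values on D_I matter). *)
Record interp (Sa : Type) (ara : Sa -> nat) (Sb : Type) (arb : Sb -> nat)
    (A : structure ara) (B : structure arb) : Type := Interp {
  idim : nat;
  idelta : ppf ara 'I_idim;
  iphi : forall s : Sb, ppf ara ('I_(arb s) * 'I_idim);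
  ieq : ppf ara (bool * 'I_idim);
  imap : ('I_idim -> dom A) -> dom B;
  imap_surj : forall b : dom B, exists x, sat A idelta x /\ imap x = b;
  iphi_spec : forall (s : Sb) (x : 'I_(arb s) -> 'I_idim -> dom A),
      (forall j, sat A idelta (x j)) ->
      (@rel _ _ B s (fun j => imap (x j)) <->
       sat A (iphi s) (fun p => x p.1 p.2));
  ieq_spec : forall x y : 'I_idim -> dom A,
      sat A idelta x -> sat A idelta y ->
      (imap x = imap y <->
       sat A ieq (fun p => if p.1 then y p.2 else x p.2))
}.

Arguments idim {Sa ara Sb arb A B} i.
Arguments idelta {Sa ara Sb arb A B} i.
Arguments iphi {Sa ara Sb arb A B} i s.
Arguments ieq {Sa ara Sb arb A B} i.
Arguments imap {Sa ara Sb arb A B} i _.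

Definition pp_homotopic (Sa : Type) (ara : Sa -> nat) (A : structure ara)
    (T : Type) (X Y : Type)
    (D1 : (X -> dom A) -> Prop) (h1 : (X -> dom A) -> T)
    (D2 : (Y -> dom A) -> Prop) (h2 : (Y -> dom A) -> T) : Prop :=
  exists psi : ppf ara (X + Y),
    forall (x : X -> dom A) (y : Y -> dom A),
      sat A psi (fun v => match v with inl i => x i | inr j => y j end) <->
      (D1 x /\ D2 y /\ h1 x = h2 y).

Arguments pp_homotopic {Sa ara} A {T X Y} D1 h1 D2 h2.

(* For I1 a d1-dim interpretation of C1 in C2 and I2 a d2-dim interpretation
   of C2 in C3, the composite I1 o I2 is d1*d2-dimensional; its coordinates
   are indexed by pairs (i, k) : 'I_d1 * 'I_d2, (i,k) standing for a^i_k. *)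
Section Comp.
Variables (S1 S2 S3 : Type) (ar1 : S1 -> nat) (ar2 : S2 -> nat)
  (ar3 : S3 -> nat) (C1 : structure ar1) (C2 : structure ar2)
  (C3 : structure ar3).
Variables (I1 : interp C2 C1) (I2 : interp C3 C2).

Definition comp_dom (x : 'I_(idim I1) * 'I_(idim I2) -> dom C3) : Prop :=
  (forall i, sat C3 (idelta I2) (fun k => x (i, k))) /\
  sat C2 (idelta I1) (fun i => imap I2 (fun k => x (i, k))).

Definition comp_map (x : 'I_(idim I1) * 'I_(idim I2) -> dom C3) : dom C1 :=
  imap I1 (fun i => imap I2 (fun k => x (i, k))).
End Comp.
Arguments comp_dom {S1 S2 S3 ar1 ar2 ar3 C1 C2 C3} I1 I2 x.
Arguments comp_map {S1 S2 S3 ar1 ar2 ar3 C1 C2 C3} I1 I2 x.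

Definition id_dom (S : Type) (ar : S -> nat) (C : structure ar)
  (x : 'I_1 -> dom C) : Prop := True.
Definition id_map (S : Type) (ar : S -> nat) (C : structure ar)
  (x : 'I_1 -> dom C) : dom C := x ord0.

Definition pp_bi_interpretable (Sa : Type) (ara : Sa -> nat)
    (Sb : Type) (arb : Sb -> nat) (A : structure ara) (B : structure arb)
    : Prop :=
  exists (I : interp A B) (J : interp B A),
    pp_homotopic B (comp_dom I J) (comp_map I J) (@id_dom _ _ B) (@id_map _ _ B) /\
    pp_homotopic A (comp_dom J I) (comp_map J I) (@id_dom _ _ A) (@id_map _ _ A).

From Pilot Require Import Defs.
From mathcomp Require Import all_boot.
From Stdlib Require Import FunctionalExtensionality.

Set Implicit Arguments.
Unset Strict Implicit.
Unset Printing Implicit Defensive.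

(* Let n = m + 1 and give B the domain C^n with: for each relation R of C the
   unary relation U_R of the tuples whose first (arity R) entries lie in R, a
   nullary copy of each nullary R, and for p, q < n the binary relations
   E_pq = {(a, b) | a_p = b_q}.  C is interpreted in B by a |-> a_0, translating
   R(x_1, ..., x_k) into (exists a, U_R(a) /\ E_j0(a, x_j) for all j); B is
   interpreted n-dimensionally in C by the identity.  The composites are
   homotopic to the identities through x_00 = y in C and through the
   conjunction of the E_0i(x_i, y) in B. *)

Lemma InP (T : eqType) (x : T) (s : seq T) : reflect (List.In x s) (x \in s).
Proof.
elim: s => [|y s IH] /=; first exact: ReflectF.
rewrite inE; apply: (iffP orP) => [[/eqP ->|/IH]|[->|/IH]]; by [left|right|left|right].
Qed.

Lemma finite_sig_finType (T : finType) : finite_sig T.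
Proof. by exists (enum T) => x; apply/InP; rewrite mem_enum. Qed.

Lemma finite_sig_sum (T U : Type) : finite_sig T -> finite_sig U -> finite_sig (T + U).
Proof.
move=> [lT lT_all] [lU lU_all]; exists (List.map inl lT ++ List.map inr lU)%list.
by move=> [x|y]; apply: List.in_or_app; [left|right]; apply: List.in_map.
Qed.

Lemma finite_sig_sub (T : Type) (P : pred T) : finite_sig T -> finite_sig {x | P x}.
Proof.
move=> [l l_all]; exists (pmap insub l) => u; move: (l_all (val u)).
elim: l {l_all} => //= x l IH [->|/IH]; first by rewrite valK; left.
by case: insub => //= v; right.
Qed.

Lemma finite_sig_surj (T U : Type) (f : T -> U) :
  (forall y, exists x, f x = y) -> finite_sig T -> finite_sig U.
Proof.
move=> f_surj [l l_all]; exists (List.map f l) => y.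
by have [x <-] := f_surj y; apply: List.in_map.
Qed.

Definition bigPAnd (St : Type) (ar : St -> nat) (V : Type) (k : nat)
  (f : 'I_k -> ppf ar V) : ppf ar V :=
  foldr (fun i g => PAnd (f i) g) (PTop ar V) (enum 'I_k).

Lemma sat_bigPAnd (St : Type) (ar : St -> nat) (A : structure ar) (V : Type)
  (k : nat) (f : 'I_k -> ppf ar V) (e : V -> dom A) :
  sat A (bigPAnd f) e <-> forall i, sat A (f i) e.
Proof.
suff sat_foldr (s : seq 'I_k) : sat A (foldr (fun i g => PAnd (f i) g) (PTop ar V) s) e
    <-> (forall i, i \in s -> sat A (f i) e).
  by rewrite sat_foldr; split=> fe i //; apply: fe; rewrite mem_enum.
elim: s => [|j s IH] /=; first by [].
rewrite IH; split=> [[fj fs] i|fe]; first by rewrite inE => /predU1P [->|/fs].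
by split=> [|i si]; apply: fe; rewrite inE ?eqxx ?si ?orbT.
Qed.

Definition args2 (V : Type) (u v : V) (k : 'I_2) : V := if k == ord0 then u else v.

Definition empty_tuple {T : Type} {k : nat} (k0 : k = 0) (j : 'I_k) : T.
Proof. by subst k; case: j. Defined.

Lemma tuple_eq0 (T : Type) (k : nat) (k0 : k = 0) (t t' : 'I_k -> T) : t = t'.
Proof. by apply: functional_extensionality; subst k; case. Qed.

Lemma rel_ar0 (St : Type) (ar : St -> nat) (A : structure ar) (s : St)
  (t t' : 'I_(ar s) -> dom A) : ar s = 0 -> Defs.rel A s t <-> Defs.rel A s t'.
Proof. by move=> s0; rewrite (tuple_eq0 s0 t t'). Qed.

Definition eq0_or_pos (k : nat) : (k == 0) + (0 < k) :=
  match k with 0 => inl isT | _.+1 => inr isT end.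

Definition pad (T : Type) (k n : nat) (d : T) (t : 'I_k -> T) (i : 'I_n) : T :=
  if insub (val i) is Some j then t j else d.

Lemma pad_widen (T : Type) (k n : nat) (le_kn : k <= n) (d : T) (t : 'I_k -> T)
  (j : 'I_k) : pad d t (widen_ord le_kn j) = t j.
Proof. by rewrite /pad /= valK. Qed.

Section Binarization.

Variables (Sc : Type) (arc : Sc -> nat) (C : structure arc) (m : nat).
Hypothesis arc_le : forall s, arc s <= m.

(* One coordinate more than the maximal arity, so that coordinate 0 exists
   even when [m = 0]. *)
Local Notation n := m.+1.

Definition widen_arg (s : Sc) : 'I_(arc s) -> 'I_n := widen_ord (leqW (arc_le s)).

(* Nullary relations need their own copies: for empty [C] the existential
   formula of [proj_phi] would make every nullary relation false. *)
Inductive bin_sym : Type :=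
  | BUnary of Sc
  | BNullary of {s : Sc | arc s == 0}
  | BEq of 'I_n & 'I_n.

Definition bin_ar (s : bin_sym) : nat :=
  match s with BUnary _ => 1 | BNullary _ => 0 | BEq _ _ => 2 end.

Definition bin_rel (s : bin_sym) : ('I_(bin_ar s) -> 'I_n -> dom C) -> Prop :=
  match s return ('I_(bin_ar s) -> 'I_n -> dom C) -> Prop with
  | BUnary s => fun a => Defs.rel C s (fun j => a ord0 (widen_arg j))
  | BNullary s => fun _ => Defs.rel C (val s) (empty_tuple (eqP (valP s)))
  | BEq p q => fun a => a ord0 p = a ord_max q
  end.

Definition bin_struct : structure bin_ar := Structure bin_rel.

Lemma bin_ar_le2 (s : bin_sym) : bin_ar s <= 2.
Proof. by case: s. Qed.

Lemma finite_bin_sig : finite_sig Sc -> finite_sig bin_sym.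
Proof.
move=> finSc.
pose f (u : Sc + {s | arc s == 0} + 'I_n * 'I_n) :=
  match u with
  | inl (inl s) => BUnary s
  | inl (inr s) => BNullary s
  | inr pq => BEq pq.1 pq.2
  end.
apply: (@finite_sig_surj _ _ f).
  by case=> [s|s|p q];
    [exists (inl (inl s)) | exists (inl (inr s)) | exists (inr (p, q))].
apply: finite_sig_sum; last exact: finite_sig_finType.
by apply: finite_sig_sum => //; apply: finite_sig_sub.
Qed.

Definition proj_phi (s : Sc) : ppf bin_ar ('I_(arc s) * 'I_1) :=
  match eq0_or_pos (arc s) with
  | inl s0 => PAtom (s := BNullary (exist _ s s0)) (empty_tuple (erefl 0))
  | inr _ => PEx (PAnd (PAtom (s := BUnary s) (fun _ => None))
       (bigPAnd (fun j =>
          PAtom (s := BEq (widen_arg j) ord0) (args2 None (Some (j, ord0))))))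
  end.

Lemma sat_proj_phi (s : Sc) (x : 'I_(arc s) -> 'I_1 -> 'I_n -> dom C) :
  Defs.rel C s (fun j => x j ord0 ord0) <->
  sat bin_struct (proj_phi s) (fun p => x p.1 p.2).
Proof.
rewrite /proj_phi; case: eq0_or_pos => [s0|s_pos] /=.
  exact: rel_ar0 (eqP s0).
set t := fun j => x j ord0 ord0; split=> [Rt|[a [Ra /sat_bigPAnd a_t]]].
  exists (pad (t (Ordinal s_pos)) t); split.
    by rewrite (functional_extensionality _ t (pad_widen _ _ _)).
  by apply/sat_bigPAnd => j /=; rewrite pad_widen.
suff -> : t = (fun j => a (widen_arg j)) by [].
by apply: functional_extensionality => j; have /= -> := a_t j.
Qed.

Definition proj_interp : interp bin_struct C.
Proof.
refine (@Interp _ _ _ _ bin_struct C 1 (PTop _ _) proj_phi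
  (PAtom (s := BEq ord0 ord0) (args2 (false, ord0) (true, ord0)))
  (fun x => x ord0 ord0) _ _ _).
- by move=> c; exists (fun _ _ => c).
- by move=> s x _; apply: sat_proj_phi.
- by [].
Defined.

Definition tuple_phi (s : bin_sym) : ppf arc ('I_(bin_ar s) * 'I_n) :=
  match s return ppf arc ('I_(bin_ar s) * 'I_n) with
  | BUnary s => PAtom (s := s) (fun j => (ord0, widen_arg j))
  | BNullary s => PAtom (s := val s) (empty_tuple (eqP (valP s)))
  | BEq p q => PEq arc (ord0, p) (ord_max, q)
  end.

Lemma sat_tuple_phi (s : bin_sym) (x : 'I_(bin_ar s) -> 'I_n -> dom C) :
  bin_rel x <-> sat C (tuple_phi s) (fun p => x p.1 p.2).
Proof.
by case: s x => [s|s x|p q x] //=; exact: rel_ar0 (eqP (valP s)).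
Qed.

Lemma sat_tuple_eq (x y : 'I_n -> dom C) :
  x = y <-> sat C (bigPAnd (fun k => PEq arc (false, k) (true, k)))
                  (fun p => if p.1 then y p.2 else x p.2).
Proof.
rewrite sat_bigPAnd; split=> [-> //|xy].
exact: functional_extensionality.
Qed.

Definition tuple_interp : interp C bin_struct.
Proof.
refine (@Interp _ _ _ _ C bin_struct n (PTop _ _) tuple_phi
  (bigPAnd (fun k => PEq arc (false, k) (true, k))) id _ _ _).
- by move=> a; exists a.
- by move=> s x _; apply: sat_tuple_phi.
- by move=> x y _ _; apply: sat_tuple_eq.
Defined.

Lemma proj_tuple_homotopic_id :
  pp_homotopic C (comp_dom proj_interp tuple_interp) (comp_map proj_interp tuple_interp)
    (@id_dom _ _ C) (@id_map _ _ C).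
Proof.
exists (PEq arc (inl (ord0, ord0)) (inr ord0)) => x y.
rewrite /comp_dom /comp_map /id_map /=.
by split=> [xy|[_ [_ ->]]].
Qed.

Lemma tuple_proj_homotopic_id :
  pp_homotopic bin_struct (comp_dom tuple_interp proj_interp)
    (comp_map tuple_interp proj_interp)
    (@id_dom _ _ bin_struct) (@id_map _ _ bin_struct).
Proof.
exists (bigPAnd (fun i =>
  PAtom (s := BEq ord0 i) (args2 (inl (i, ord0)) (inr ord0)))) => x y.
rewrite sat_bigPAnd /comp_dom /comp_map /id_map /=.
by split=> [xy|[_ [_ <-]] //]; do 2 split=> //; apply: functional_extensionality.
Qed.

Lemma bin_pp_bi_interpretable : pp_bi_interpretable bin_struct C.
Proof.
exists proj_interp, tuple_interp.
by split; [apply: proj_tuple_homotopic_id|apply: tuple_proj_homotopic_id].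
Qed.

End Binarization.

Theorem mainTheorem16 (Sc : Type) (arc : Sc -> nat) (C : structure arc)
  (m : nat) (Hm : forall s : Sc, arc s <= m) :
  exists (Sb : Type) (arb : Sb -> nat) (B : structure arb),
    (forall s : Sb, arb s <= 2) /\
    pp_bi_interpretable B C /\
    (finite_sig Sc -> finite_sig Sb).
Proof.
exists (bin_sym arc m), (@bin_ar _ arc m), (bin_struct C Hm).
split; first exact: bin_ar_le2.
split; [exact: bin_pp_bi_interpretable | exact: finite_bin_sig].
Qed.
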